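(* Under Assumptions 1-MP, 2-MP(a) and 3-MP of the multi-period setup below (with $\frac{1}{\mathcal{T}}\sum_{t=1}^{\mathcal{T}}\mathbb{E}[\ddot W_t^2]>0$), $$\beta^{twfe}=\sum_{g\in\mathcal{G}}w^{g,within}(g)\,\delta^{WITHIN}(g)+\sum_{g\in\mathcal{G}}\sum_{k\in\mathcal{G},k>g}\Big\{w^{g,post}(g,k)\,\delta^{MID,PRE}(g,k)+w^{k,post}(g,k)\,\delta^{POST,MID}(g,k)+w^{long}(g,k)\,\delta^{POST,PRE}(g,k)\Big\}.$$ Moreover all weights are nonnegative and $\sum_{g}w^{g,within}(g)+\sum_{g}\sum_{k>g}\{w^{g,post}(g,k)+w^{k,post}(g,k)+w^{long}(g,k)\}=1$.
   Context: Multi-period setup. Periods $t=1,\dots,\mathcal{T}$. Each unit has a timing group $G\in\mathcal{G}\subseteq\{2,\dots,\mathcal{T}+1\}$ ($G=\mathcal{T}+1$ means never treated) and a dose $D\ge0$, with $D=0$ exactly for never-treated units and $D\in\mathcal{D}_+$ for units with $G\le\mathcal{T}$. Potential outcomes $Y_t(g,d)$; $Y_t(0):=Y_t(\mathcal{T}+1,0)$. $W_t:=D\,\mathbf{1}\{t\ge G\}$. Observed $Y_t=Y_t(0)\mathbf{1}\{t<G\}+Y_t(G,D)\mathbf{1}\{t\ge G\}$; finite second moments. 1-MP: $\{Y_{i1},\dots,Y_{i\mathcal{T}},D_i,G_i\}$ i.i.d. 2-MP(a): support of $D$ is $\{0\}\cup\mathcal{D}_+$, $\mathcal{D}_+\subset(0,\infty)$,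 $\mathbb{P}(D=0)>0$, every $d\in\mathcal{D}_+$ is in the support of $D\mid G=g$ for $g\le\mathcal{T}$. 3-MP: (a) $Y_t(g,d)=Y_t(0)$ for $t<g$; (b) $W_1=0$ and $W_{t-1}=d\Rightarrow W_t=d$. TWFE: $\bar W_i:=\frac1{\mathcal{T}}\sum_tW_{it}$, $\ddot W_{it}:=(W_{it}-\bar W_i)-(\mathbb{E}[W_t]-\frac1{\mathcal{T}}\sum_s\mathbb{E}[W_s])$, $\beta^{twfe}:=\frac{\frac1{\mathcal{T}}\sum_t\mathbb{E}[Y_{t}\ddot W_{t}]}{\frac1{\mathcal{T}}\sum_t\mathbb{E}[\ddot W_t^2]}$ (the population coefficient of $W_{it}$ in $Y_{it}=\theta_t+\eta_i+\beta W_{it}+v_{it}$). Notation: $p_g:=\mathbb{P}(G=g)$; $\bar G_g:=(\mathcal{T}-g+1)/\mathcal{T}$ (so $\bar G_{\mathcal{T}+1}=0$). For $t_1\le t_2$, $\bar Y^{(t_1,t_2)}:=\frac1{t_2-t_1+1}\sum_{t=t_1}^{t_2}Y_t$; for $g<k$: $\bar Y^{PRE(g)}:=\bar Y^{(1,g-1)}$, $\bar Y^{MID(g,k)}:=\bar Y^{(g,k-1)}$, $\bar Y^{POST(k)}:=\bar Y^{(k,\mathcal{T})}$. Comparisons: $\delta^{WITHIN}(g):=\mathrm{cov}(\bar Y^{POST(g)}-\bar Y^{PRE(g)},D\mid G=g)/\mathrm{var}(D\mid G=g)$; $\delta^{MID,PRE}(g,k):=\big(\mathbb{E}[\bar Y^{MID(g,k)}-\bar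 Y^{PRE(g)}\mid G=g]-\mathbb{E}[\bar Y^{MID(g,k)}-\bar Y^{PRE(g)}\mid G=k]\big)/\mathbb{E}[D\mid G=g]$; $\delta^{POST,MID}(g,k):=\big(\mathbb{E}[\bar Y^{POST(k)}-\bar Y^{MID(g,k)}\mid G=k]-\mathbb{E}[\bar Y^{POST(k)}-\bar Y^{MID(g,k)}\mid G=g]\big)/\mathbb{E}[D\mid G=k]$; $\delta^{POST,PRE}(g,k):=\big(\mathbb{E}[\bar Y^{POST(k)}-\bar Y^{PRE(g)}\mid G=g]-\mathbb{E}[\bar Y^{POST(k)}-\bar Y^{PRE(g)}\mid G=k]\big)/(\mathbb{E}[D\mid G=g]-\mathbb{E}[D\mid G=k])$. Weights, with $V:=\frac1{\mathcal{T}}\sum_t\mathbb{E}[\ddot W_t^2]$: $w^{g,within}(g):=\mathrm{var}(D\mid G=g)(1-\bar G_g)\bar G_g\,p_g/V$; $w^{g,post}(g,k):=\mathbb{E}[D\mid G=g]^2(1-\bar G_g)(\bar G_g-\bar G_k)\,p_gp_k/V$; $w^{k,post}(g,k):=\mathbb{E}[D\mid G=k]^2\bar G_k(\bar G_g-\bar G_k)\,p_gp_k/V$; $w^{long}(g,k):=(\mathbb{E}[D\mid G=g]-\mathbb{E}[D\mid G=k])^2\bar G_k(1-\bar G_g)\,p_gp_k/V$. (Note $p_gp_k=(p_g+p_k)^2p_{g|\{g,k\}}(1-p_{g|\{g,k\}})$ with $p_{g|\{g,k\}}:=\mathbb{P}(G=g\mid G\in\{g,k\})$.) Convention: any product of a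 zero weight with a comparison whose denominator vanishes (or whose time window is empty) is taken to be zero. *)

From HB Require Import structures.
From mathcomp Require Import all_boot all_order all_algebra.
From mathcomp Require Import all_classical all_reals all_analysis.
Set Implicit Arguments. Unset Strict Implicit. Unset Printing Implicit Defensive.
Import Order.TTheory GRing.Theory Num.Theory.
Local Open Scope classical_set_scope.
Local Open Scope ring_scope.

(* Population quantities for ONE unit (a draw of the i.i.d. vector
   (Y_1..Y_T, D, G)) on a probability space P.  Real-valued expectation. *)
Definition Ex {d} {Om : measurableType d} {R : realType}
  (P : probability Om R) (X : Om -> R) : R := fine ('E_P[X])%E.

Definition Pr {d} {Om : measurableType d} {R : realType}
  (P : probability Om R) (A : set Om) : R := fine (P A).

Definition indG {Om} {R : realType} (G : Om -> nat) (g : nat) (w : Om) : R :=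
  if G w == g then 1 else 0.

Definition pg {d} {Om : measurableType d} {R : realType}
  (P : probability Om R) (G : Om -> nat) (g : nat) : R :=
  Pr P [set w | G w = g].

Definition cE {d} {Om : measurableType d} {R : realType}
  (P : probability Om R) (G : Om -> nat) (g : nat) (X : Om -> R) : R :=
  Ex P (fun w => X w * indG G g w) / pg P G g.

Definition cCov {d} {Om : measurableType d} {R : realType}
  (P : probability Om R) (G : Om -> nat) (g : nat) (X Z : Om -> R) : R :=
  cE P G g (fun w => (X w - cE P G g X) * (Z w - cE P G g Z)).

Definition cVar {d} {Om : measurableType d} {R : realType}
  (P : probability Om R) (G : Om -> nat) (g : nat) (X : Om -> R) : R :=
  cCov P G g X X.

Definition in_support {d} {Om : measurableType d} {R : realType}
  (P : probability Om R) (X : Om -> R) (x : R) : Prop :=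
  forall e : R, 0 < e -> 0 < Pr P [set w | `|X w - x| < e].

Definition in_csupport {d} {Om : measurableType d} {R : realType}
  (P : probability Om R) (G : Om -> nat) (g : nat) (X : Om -> R) (x : R) : Prop :=
  forall e : R, 0 < e -> 0 < Pr P [set w | `|X w - x| < e /\ G w = g].

Definition Wt {Om} {R : realType} (G : Om -> nat) (D : Om -> R) (t : nat) (w : Om) : R :=
  if (G w <= t)%N then D w else 0.

Definition Wbar {Om} {R : realType} (TT : nat) (G : Om -> nat) (D : Om -> R) (w : Om) : R :=
  (\sum_(1 <= t < TT.+1) Wt G D t w) / TT%:R.

Definition Wdd {d} {Om : measurableType d} {R : realType}
  (P : probability Om R) (TT : nat) (G : Om -> nat) (D : Om -> R) (t : nat) (w : Om) : R :=
  (Wt G D t w - Wbar TT G D w)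
  - (Ex P (Wt G D t) - (\sum_(1 <= s < TT.+1) Ex P (Wt G D s)) / TT%:R).

Definition Vtw {d} {Om : measurableType d} {R : realType}
  (P : probability Om R) (TT : nat) (G : Om -> nat) (D : Om -> R) : R :=
  (\sum_(1 <= t < TT.+1) Ex P (fun w => Wdd P TT G D t w ^+ 2)) / TT%:R.

Definition beta_twfe {d} {Om : measurableType d} {R : realType}
  (P : probability Om R) (TT : nat) (G : Om -> nat) (D : Om -> R)
  (Y : nat -> Om -> R) : R :=
  ((\sum_(1 <= t < TT.+1) Ex P (fun w => Y t w * Wdd P TT G D t w)) / TT%:R)
  / Vtw P TT G D.

Definition Yavg {Om} {R : realType} (Y : nat -> Om -> R) (t1 t2 : nat) (w : Om) : R :=
  (\sum_(t1 <= t < t2.+1) Y t w) / (t2.+1 - t1)%:R.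

Definition Ypre {Om} {R : realType} (Y : nat -> Om -> R) (g : nat) := Yavg Y 1 g.-1.
Definition Ymid {Om} {R : realType} (Y : nat -> Om -> R) (g k : nat) := Yavg Y g k.-1.
Definition Ypost {Om} {R : realType} (TT : nat) (Y : nat -> Om -> R) (k : nat) := Yavg Y k TT.

Definition Gbar {R : realType} (TT g : nat) : R := (TT.+1 - g)%:R / TT%:R.

Section comparisons.
Context {d} {Om : measurableType d} {R : realType} (P : probability Om R)
  (TT : nat) (G : Om -> nat) (D : Om -> R) (Y : nat -> Om -> R).

Definition delta_within (g : nat) : R :=
  cCov P G g (fun w => Ypost TT Y g w - Ypre Y g w) D / cVar P G g D.

Definition delta_mid_pre (g k : nat) : R :=
  (cE P G g (fun w => Ymid Y g k w - Ypre Y g w)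
   - cE P G k (fun w => Ymid Y g k w - Ypre Y g w)) / cE P G g D.

Definition delta_post_mid (g k : nat) : R :=
  (cE P G k (fun w => Ypost TT Y k w - Ymid Y g k w)
   - cE P G g (fun w => Ypost TT Y k w - Ymid Y g k w)) / cE P G k D.

Definition delta_post_pre (g k : nat) : R :=
  (cE P G g (fun w => Ypost TT Y k w - Ypre Y g w)
   - cE P G k (fun w => Ypost TT Y k w - Ypre Y g w)) / (cE P G g D - cE P G k D).

Definition w_within (g : nat) : R :=
  cVar P G g D * (1 - Gbar TT g) * Gbar TT g * pg P G g / Vtw P TT G D.

Definition w_gpost (g k : nat) : R :=
  cE P G g D ^+ 2 * (1 - Gbar TT g) * (Gbar TT g - Gbar TT k)
  * (pg P G g * pg P G k) / Vtw P TT G D.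

Definition w_kpost (g k : nat) : R :=
  cE P G k D ^+ 2 * Gbar TT k * (Gbar TT g - Gbar TT k)
  * (pg P G g * pg P G k) / Vtw P TT G D.

Definition w_long (g k : nat) : R :=
  (cE P G g D - cE P G k D) ^+ 2 * Gbar TT k * (1 - Gbar TT g)
  * (pg P G g * pg P G k) / Vtw P TT G D.

End comparisons.

From HB Require Import structures.
From mathcomp Require Import all_boot all_order all_algebra.
From mathcomp Require Import all_classical all_reals all_analysis.
From mathcomp Require Import ring zify measurable_realfun.
Import Order.TTheory GRing.Theory Num.Theory.
Local Open Scope classical_set_scope.
Local Open Scope ring_scope.

(* Write W_t - \bar W = a_G(t) D with a_g(t) = 1{t >= g} - \bar G_g.  The
   doubly demeaned treatment is this variable centred at its mean, so the
   period-t numerator and denominator of beta^twfe are the covariances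
   Cov(Y_t, a_G(t) D) and Var(a_G(t) D).  The law of total covariance over the
   cohorts {G = g} splits each of them into within-cohort covariances,
   a_g(t) Cov(Y_t, D | G = g), and a between-cohort part written, by
   Lagrange's identity, as a sum over pairs of cohorts g < k.  Averaging over
   t, the timing factors a_g(t) turn period-wise quantities into contrasts of
   window averages (PRE, MID, POST), which yields the comparisons delta and
   the unnormalised weights; the denominator is the sum of these weights. *)

Section Expectation.
Context {d} {Om : measurableType d} {R : realType} (P : probability Om R).
Notation L1 := (Lfun P 1).

Lemma Ex_add (X Z : Om -> R) : X \in L1 -> Z \in L1 ->
  Ex P (fun w => X w + Z w) = Ex P X + Ex P Z.
Proof.
move=> hX hZ; rewrite /Ex (expectationD hX hZ) fineD //;
  exact: expectation_fin_num.
Qed.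

Lemma Ex_scale (k : R) (X : Om -> R) : X \in L1 ->
  Ex P (fun w => k * X w) = k * Ex P X.
Proof.
move=> hX; rewrite /Ex (_ : (fun w => k * X w) = k \o* X).
  by rewrite (expectationZl _ hX) fineM //=; exact: expectation_fin_num.
by apply/funext => w /=; rewrite mulrC.
Qed.

Lemma Ex_cst (c : R) : Ex P (fun _ => c) = c.
Proof. by rewrite /Ex expectation_cst. Qed.

Lemma L1_sum (I : Type) (s : seq I) (F : I -> Om -> R) :
  (forall i, F i \in L1) -> (fun w => \sum_(i <- s) F i w) \in L1.
Proof.
move=> hF; have -> : (fun w => \sum_(i <- s) F i w) = \sum_(i <- s) F i.
  by apply/funext => w; rewrite fct_sumE.
by apply: rpred_sum.
Qed.

Lemma Ex_sum (I : Type) (s : seq I) (F : I -> Om -> R) :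
  (forall i, F i \in L1) ->
  Ex P (fun w => \sum_(i <- s) F i w) = \sum_(i <- s) Ex P (F i).
Proof.
move=> hF; elim: s => [|a s IH].
  by under eq_fun do rewrite big_nil; rewrite Ex_cst big_nil.
under eq_fun do rewrite big_cons.
by rewrite Ex_add ?IH ?big_cons ?L1_sum.
Qed.

Lemma Ex_ge0 (X : Om -> R) : (forall w, 0 <= X w) -> 0 <= Ex P X.
Proof. by move=> h; rewrite /Ex fine_ge0 // expectation_ge0. Qed.

Lemma L2_L1 (f : Om -> R) : f \in Lfun P 2%:E -> f \in L1.
Proof. by apply: Lfun_subset12; rewrite fin_num_measure. Qed.

Lemma L2_subr_cst (c : R) (f : Om -> R) : f \in Lfun P 2%:E ->
  (fun w => f w - c) \in Lfun P 2%:E.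
Proof. by move=> hf; have /(_ (lee1n 2)) := rpredB hf (Lfun_cst P c 2). Qed.

Definition Covar (X Z : Om -> R) : R :=
  Ex P (fun w => X w * Z w) - Ex P X * Ex P Z.

(* Both the TWFE numerator and denominator are expectations of a variable
   times a centred one; this is a covariance. *)
Lemma Ex_mul_centred (X Z : Om -> R) :
  X \in L1 -> (fun w => X w * Z w) \in L1 ->
  Ex P (fun w => X w * (Z w - Ex P Z)) = Covar X Z.
Proof.
move=> hX hXZ.
have -> : (fun w => X w * (Z w - Ex P Z)) = (fun w => X w * Z w + (- Ex P Z) * X w).
  by apply/funext => w; ring.
rewrite Ex_add ?Ex_scale //; last exact: rpredZ.
by rewrite /Covar; ring.
Qed.

Lemma Ex_sq_centred (Z : Om -> R) : Z \in L1 -> (fun w => Z w * Z w) \in L1 ->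
  Ex P (fun w => (Z w - Ex P Z) ^+ 2) = Covar Z Z.
Proof.
move=> hZ hZZ.
have -> : (fun w => (Z w - Ex P Z) ^+ 2) =
          (fun w => (Z w * Z w + (- 2 * Ex P Z) * Z w) + Ex P Z ^+ 2).
  by apply/funext => w; ring.
rewrite Ex_add ?Ex_cst; [|exact: rpredD hZZ (rpredZ _ hZ) | exact: Lfun_cst].
rewrite Ex_add ?Ex_scale //; last exact: rpredZ.
by rewrite /Covar; ring.
Qed.

End Expectation.

Lemma weighted_cov_pairs {R : numFieldType} (Gs : seq nat) (p x y : nat -> R) :
  \sum_(g <- Gs) p g = 1 ->
  \sum_(g <- Gs) p g * x g * y g
    - (\sum_(g <- Gs) p g * x g) * (\sum_(g <- Gs) p g * y g)
  = \sum_(g <- Gs) \sum_(k <- Gs | (g < k)%N)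
       p g * p k * ((x g - x k) * (y g - y k)).
Proof.
move=> hp.
set F := fun g k => p g * p k * ((x g - x k) * (y g - y k)).
set Sxy := \sum_(g <- Gs) p g * x g * y g.
set Sx := \sum_(g <- Gs) p g * x g.
set Sy := \sum_(g <- Gs) p g * y g.
have all_pairs : \sum_(g <- Gs) \sum_(k <- Gs) F g k = 2 * (Sxy - Sx * Sy).
  have row g : \sum_(k <- Gs) F g k =
      p g * x g * y g + p g * Sxy - p g * x g * Sy - Sx * (p g * y g).
    rewrite /Sxy /Sx /Sy -[p g * x g * y g]mulr1 -{1}hp.
    rewrite !big_distrr /= big_distrl /= -big_split -!sumrB /=.
    by apply: eq_bigr => k _; rewrite /F; ring.
  under eq_bigr do rewrite row.
  rewrite !sumrB big_split /= -!big_distrl -big_distrr /= hp -/Sx -/Sy -/Sxy.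
  ring.
have split_row g : \sum_(k <- Gs) F g k =
    \sum_(k <- Gs | (g < k)%N) F g k + \sum_(k <- Gs | (k < g)%N) F g k.
  rewrite (bigID (fun k => (g < k)%N)) /=; congr (_ + _).
  rewrite (bigID (fun k => (k < g)%N)) /= [X in _ + X]big1 ?addr0; last first.
    move=> k /andP [h1 h2]; have -> : k = g by apply/eqP; rewrite eqn_leq; lia.
    by rewrite /F !subrr mul0r mulr0.
  by apply: eq_bigl => k; case: (ltngtP g k).
have sym : \sum_(g <- Gs) \sum_(k <- Gs | (k < g)%N) F g k =
           \sum_(g <- Gs) \sum_(k <- Gs | (g < k)%N) F g k.
  under eq_bigr do rewrite big_mkcond /=.
  rewrite exchange_big /=; apply: eq_bigr => g _; rewrite [RHS]big_mkcond /=.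
  by apply: eq_bigr => k _; case: ifP => // _; rewrite /F; ring.
have : 2 * (Sxy - Sx * Sy) = 2 * \sum_(g <- Gs) \sum_(k <- Gs | (g < k)%N) F g k.
  by rewrite -all_pairs; under eq_bigr do rewrite split_row; rewrite big_split /= sym; ring.
by apply: mulfI; rewrite pnatr_eq0.
Qed.

(* Weight times comparison, when the comparison divides by a square root of
   the weight's leading factor. *)
Lemma ratio_cancel_sq {F : fieldType} (a b c e f V : F) :
  a ^+ 2 * b * c * e / V * (f / a) = a * b * c * e * f / V.
Proof.
have [->|a0] := eqVneq a 0; first by rewrite expr0n /= !mul0r.
have [->|V0] := eqVneq V 0; first by rewrite invr0 !(mul0r, mulr0).
by rewrite expr2; field; rewrite V0 a0.
Qed.

(* Same when the comparison divides by the leading factor itself, which is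
   harmless as long as the numerator vanishes with it. *)
Lemma ratio_cancel {F : fieldType} (v b c e f V : F) : (v = 0 -> f = 0) ->
  v * b * c * e / V * (f / v) = b * c * e * f / V.
Proof.
move=> h; have [v0|v0] := eqVneq v 0; first by rewrite v0 (h v0) !(mul0r, mulr0).
have [->|V0] := eqVneq V 0; first by rewrite invr0 !(mul0r, mulr0).
by field; rewrite V0 v0.
Qed.

Definition win {R : realType} (t1 t2 t : nat) : R :=
  ((t1 <= t <= t2)%N)%:R / (t2.+1 - t1)%:R.

Definition tdev {R : realType} (T g t : nat) : R := ((g <= t)%N)%:R - Gbar T g.

Section TimeAlgebra.
Context {R : realType}.

Lemma count_treated (T g : nat) : (1 <= g)%N ->
  \sum_(1 <= t < T.+1) ((g <= t)%N)%:R = (T.+1 - g)%:R :> R.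
Proof.
move=> g1; elim: T => [|T IH].
  by rewrite big_geq // (_ : (1 - g = 0)%N) //; apply/eqP; rewrite subn_eq0.
by rewrite big_nat_recr //= IH -natrD; congr (_%:R); case: (leqP g T.+1) => /=; lia.
Qed.

Lemma GbarE (T g : nat) : (0 < T)%N -> (g <= T.+1)%N ->
  (T.+1 - g)%:R = T%:R * Gbar T g :> R.
Proof.
by move=> T0 gT; rewrite /Gbar mulrC -mulrA mulVf ?mulr1 // pnatr_eq0; lia.
Qed.

Lemma Gbar_ge0 (T g : nat) : 0 <= Gbar T g :> R.
Proof. by rewrite /Gbar divr_ge0. Qed.

Lemma Gbar_le1 (T g : nat) : (0 < T)%N -> (1 <= g)%N -> Gbar T g <= 1 :> R.
Proof. by move=> T0 g1; rewrite /Gbar ler_pdivrMr ?mul1r ?ltr0n // ler_nat; lia. Qed.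

Lemma Gbar_mono (T g k : nat) : (0 < T)%N -> (g <= k)%N -> Gbar T k <= Gbar T g :> R.
Proof. by move=> T0 gk; rewrite /Gbar ler_pM2r ?invr_gt0 ?ltr0n // ler_nat; lia. Qed.

Lemma window_avg (f : nat -> R) (T t1 t2 : nat) :
  (1 <= t1)%N -> (t1 <= t2.+1)%N -> (t2 <= T)%N ->
  (\sum_(t1 <= t < t2.+1) f t) / (t2.+1 - t1)%:R =
  \sum_(1 <= t < T.+1) win t1 t2 t * f t.
Proof.
move=> h1 h2 h3.
rewrite [RHS](big_cat_nat (n := t1)) /=; [|lia|lia].
rewrite [X in _ + X](big_cat_nat (n := t2.+1)) /=; [|lia|lia].
rewrite [X in X + _]big1_seq ?add0r => [|t /andP [_]]; last first.
  by rewrite mem_index_iota /win => ht; rewrite (_ : (t1 <= t)%N = false) ?mul0r //; lia.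
rewrite [X in _ + X]big1_seq ?addr0 => [|t /andP [_]]; last first.
  rewrite mem_index_iota /win => ht.
  by rewrite (_ : (t <= t2)%N = false) ?andbF ?mul0r //; lia.
rewrite big_distrl /=; apply: eq_big_seq => t; rewrite mem_index_iota => ht.
by rewrite /win (_ : ((t1 <= t) && (t <= t2))%N = true) ?mul1r 1?mulrC //; lia.
Qed.

Lemma tdev_within (T g t : nat) : (1 <= t <= T)%N -> (2 <= g <= T.+1)%N ->
  (1 - Gbar T g) * Gbar T g * (win g T t - win 1 g.-1 t) = tdev T g t / T%:R :> R.
Proof.
move=> /andP [t1 tT] /andP [g2 gT].
have T0 : T%:R != 0 :> R by rewrite pnatr_eq0; lia.
have e1 : (T.+1 - g)%:R = T%:R + 1 - g%:R :> R by rewrite natrB // -addn1 natrD.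
have e2 : (g.-1.+1 - 1)%:R = g%:R - 1 :> R by rewrite natrB prednK //; lia.
have g1 : g%:R - 1 != 0 :> R by rewrite subr_eq0 pnatr_eq1; lia.
rewrite /win /tdev /Gbar e1 e2 t1 /=.
case: (leqP g t) => h /=.
  have -> : (t <= g.-1)%N = false by lia.
  have e : T%:R + 1 - g%:R != 0 :> R by rewrite -e1 pnatr_eq0; lia.
  by rewrite tT /=; field; rewrite T0 g1 e.
have -> : (t <= g.-1)%N = true by rewrite -ltnS prednK; lia.
by rewrite /= mul0r; field; rewrite T0 g1.
Qed.

Lemma tdev_pair (T g k t : nat) (x y : R) : (1 <= t <= T)%N -> (2 <= g)%N ->
  (g < k)%N -> (k <= T.+1)%N ->
  (tdev T g t * x - tdev T k t * y) / T%:R =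
    x * (1 - Gbar T g) * (Gbar T g - Gbar T k) * (win g k.-1 t - win 1 g.-1 t)
  - y * Gbar T k * (Gbar T g - Gbar T k) * (win k T t - win g k.-1 t)
  + (x - y) * Gbar T k * (1 - Gbar T g) * (win k T t - win 1 g.-1 t).
Proof.
move=> /andP [t1 tT] g2 gk kT.
have T0 : T%:R != 0 :> R by rewrite pnatr_eq0; lia.
have e1 : (T.+1 - g)%:R = T%:R + 1 - g%:R :> R by rewrite natrB; [rewrite -addn1 natrD | lia].
have e3 : (T.+1 - k)%:R = T%:R + 1 - k%:R :> R by rewrite natrB // -addn1 natrD.
have e2 : (g.-1.+1 - 1)%:R = g%:R - 1 :> R by rewrite natrB prednK //; lia.
have e4 : (k.-1.+1 - g)%:R = k%:R - g%:R :> R by rewrite prednK ?natrB //; lia.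
have g1 : g%:R - 1 != 0 :> R by rewrite subr_eq0 pnatr_eq1; lia.
have kg : k%:R - g%:R != 0 :> R by rewrite -e4 pnatr_eq0; lia.
rewrite /win /tdev /Gbar e1 e2 e3 e4 t1 /=.
case: (leqP g t) => h1; last first.
  have -> : (k <= t)%N = false by lia.
  have -> : (t <= g.-1)%N = true by rewrite -ltnS prednK; lia.
  by rewrite /= ?mul0r; field; rewrite ?T0 ?g1 ?kg.
have -> : (t <= g.-1)%N = false by lia.
case: (leqP k t) => h2.
  have -> : (t <= k.-1)%N = false by lia.
  have e : T%:R + 1 - k%:R != 0 :> R by rewrite -e3 pnatr_eq0; lia.
  by rewrite tT /= ?mul0r; field; rewrite ?T0 ?g1 ?kg ?e.
have -> : (t <= k.-1)%N = true by rewrite -ltnS prednK; lia.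
by rewrite /= ?mul0r; field; rewrite ?T0 ?g1 ?kg.
Qed.

Lemma avg_tdev_within (T g : nat) (f : nat -> R) : (2 <= g <= T.+1)%N ->
  (\sum_(1 <= t < T.+1) tdev T g t * f t) / T%:R =
  (1 - Gbar T g) * Gbar T g * \sum_(1 <= t < T.+1) (win g T t - win 1 g.-1 t) * f t.
Proof.
move=> hg; rewrite big_distrl big_distrr /=; apply: eq_big_nat => t ht.
by rewrite mulrA tdev_within // mulrAC.
Qed.

Lemma avg_tdev_pair (T g k : nat) (x y : R) (f : nat -> R) :
  (2 <= g)%N -> (g < k)%N -> (k <= T.+1)%N ->
  (\sum_(1 <= t < T.+1) (tdev T g t * x - tdev T k t * y) * f t) / T%:R =
    x * (1 - Gbar T g) * (Gbar T g - Gbar T k)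
      * \sum_(1 <= t < T.+1) (win g k.-1 t - win 1 g.-1 t) * f t
  - y * Gbar T k * (Gbar T g - Gbar T k)
      * \sum_(1 <= t < T.+1) (win k T t - win g k.-1 t) * f t
  + (x - y) * Gbar T k * (1 - Gbar T g)
      * \sum_(1 <= t < T.+1) (win k T t - win 1 g.-1 t) * f t.
Proof.
move=> g2 gk kT; rewrite !big_distrr -sumrB -big_split big_distrl /=.
apply: eq_big_nat => t ht.
by rewrite mulrAC tdev_pair //; ring.
Qed.

Lemma avg_tdev_sq (T g : nat) : (0 < T)%N -> (1 <= g <= T.+1)%N ->
  (\sum_(1 <= t < T.+1) tdev T g t ^+ 2) / T%:R = (1 - Gbar T g) * Gbar T g :> R.
Proof.
move=> T0 /andP [g1 gT].
have sqE t : tdev T g t ^+ 2 =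
    (g <= t)%N%:R * (1 - 2 * Gbar T g) + Gbar T g ^+ 2 :> R.
  by rewrite /tdev; case: (g <= t)%N => /=; ring.
under eq_bigr do rewrite sqE.
rewrite big_split /= -big_distrl /= count_treated // sumr_const_nat GbarE //.
rewrite subn1 /= -mulr_natl.
have Tn0 : T%:R != 0 :> R by rewrite pnatr_eq0; lia.
by field.
Qed.

Lemma avg_tdev_pair_sq (T g k : nat) (x y : R) : (0 < T)%N -> (1 <= g)%N ->
  (g < k)%N -> (k <= T.+1)%N ->
  (\sum_(1 <= t < T.+1) (tdev T g t * x - tdev T k t * y) ^+ 2) / T%:R =
   x ^+ 2 * (1 - Gbar T g) * (Gbar T g - Gbar T k)
   + y ^+ 2 * Gbar T k * (Gbar T g - Gbar T k)
   + (x - y) ^+ 2 * Gbar T k * (1 - Gbar T g).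
Proof.
move=> T0 g1 gk kT.
set A := Gbar T g; set B := Gbar T k; set c := A * x - B * y.
have sqE t : (tdev T g t * x - tdev T k t * y) ^+ 2 =
    c ^+ 2 + (g <= t)%N%:R * ((x - c) ^+ 2 - c ^+ 2)
    + (k <= t)%N%:R * ((x - y - c) ^+ 2 - (x - c) ^+ 2) :> R.
  rewrite /tdev -/A -/B /c; case: (leqP k t) => h2.
    have -> : (g <= t)%N = true by lia.
    by rewrite /=; ring.
  by case: (g <= t)%N => /=; ring.
under eq_bigr do rewrite sqE.
rewrite !big_split /= -!big_distrl /= !count_treated //; last by lia.
rewrite sumr_const_nat !GbarE //; last by lia.
rewrite subn1 /= -mulr_natl -/A -/B.
have Tn0 : T%:R != 0 :> R by rewrite pnatr_eq0; lia.
by rewrite /c; field.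
Qed.

Lemma avg_cohort_split (T : nat) (Gs : seq nat) (a : nat -> nat -> R)
    (b : nat -> nat -> nat -> R) :
  (\sum_(1 <= t < T.+1) (\sum_(g <- Gs) a g t
      + \sum_(g <- Gs) \sum_(k <- Gs | (g < k)%N) b g k t)) / T%:R
  = \sum_(g <- Gs) (\sum_(1 <= t < T.+1) a g t) / T%:R
  + \sum_(g <- Gs) \sum_(k <- Gs | (g < k)%N) (\sum_(1 <= t < T.+1) b g k t) / T%:R.
Proof.
rewrite big_split /= mulrDl exchange_big big_distrl /=; congr (_ + _).
rewrite exchange_big big_distrl /=; apply: eq_bigr => g _.
by rewrite exchange_big big_distrl.
Qed.

End TimeAlgebra.

Lemma affine_nonneg_slope0 {F : realFieldType} (a b : F) :
  (forall l, 0 <= a + l * b) -> b = 0.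
Proof.
move=> h; apply/eqP; apply/negPn/negP => b0.
have := h (- (a + 1) / b); rewrite mulrAC -mulrA divff // mulr1.
by rewrite opprD addrA subrr add0r oppr_ge0 ler10.
Qed.

Section Cohorts.
Context {d} {Om : measurableType d} {R : realType} (P : probability Om R)
  (Gs : seq nat) (G : Om -> nat).
Hypothesis HGs_uniq : uniq Gs.
Hypothesis HG_in : forall w, G w \in Gs.
Hypothesis HGs_pos : forall g, g \in Gs -> 0 < pg P G g.
Hypothesis HG_meas : forall g, measurable [set w | G w = g].
Notation L1 := (Lfun P 1).
Notation L2 := (Lfun P 2%:E).

Lemma cohort_split (F : nat -> R) w : F (G w) = \sum_(g <- Gs) F g * indG G g w.
Proof.
rewrite (bigD1_seq (G w)) //= /indG eqxx mulr1 big1 ?addr0 // => g hg.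
by rewrite eq_sym (negbTE hg) mulr0.
Qed.

Lemma indG_ge0 g w : 0 <= indG G g w :> R.
Proof. by rewrite /indG; case: eqP. Qed.

Lemma indG_indic g : indG G g = \1_[set w | G w = g] :> (Om -> R).
Proof.
apply/funext => w; rewrite /indG indicE; case: eqP => h.
  by rewrite mem_set.
by rewrite memNset.
Qed.

Lemma L1_restrict g (f : Om -> R) : f \in L1 -> (fun w => f w * indG G g w) \in L1.
Proof.
move=> /[dup] hf /Lfun1_integrable hi; apply/Lfun1_integrable.
apply: le_integrable hi => //.
  apply/measurable_EFinP; apply: measurable_funM.
    by case/andP: hf; rewrite inE.
  by rewrite indG_indic; exact: measurable_indic.
move=> w _ /=; rewrite lee_fin !normrM /indG; case: eqP => _.
  by rewrite normr1 mulr1.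
by rewrite normr0 mulr0.
Qed.

Lemma indG_L1 g : indG G g \in L1.
Proof.
have := @L1_restrict g _ (Lfun_cst P 1 1).
by rewrite (_ : (fun w => _) = indG G g) //; apply/funext => w; rewrite mul1r.
Qed.

Lemma L1_cohort_scale (c : nat -> R) (H : Om -> R) :
  H \in L1 -> (fun w => c (G w) * H w) \in L1.
Proof.
move=> hH.
have -> : (fun w => c (G w) * H w) =
          (fun w => \sum_(g <- Gs) c g * (H w * indG G g w)).
  apply/funext => w; rewrite (cohort_split (fun g => c g * H w)).
  by apply: eq_bigr => g _; rewrite mulrA.
by apply: L1_sum => g; apply: rpredZ; exact: L1_restrict.
Qed.

Lemma pgE g : pg P G g = Ex P (indG G g).
Proof. by rewrite /pg /Pr /Ex indG_indic expectation_indic. Qed.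

Lemma pg_ge0 g : 0 <= pg P G g.
Proof. by rewrite /pg /Pr fine_ge0 // measure_ge0. Qed.

Lemma pg_neq0 g : g \in Gs -> pg P G g != 0.
Proof. by move=> hg; rewrite gt_eqF // HGs_pos. Qed.

Lemma sum_pg : \sum_(g <- Gs) pg P G g = 1.
Proof.
under eq_bigr do rewrite pgE.
rewrite -Ex_sum; last exact: indG_L1.
rewrite -(Ex_cst P 1); congr (Ex P _); apply/funext => w.
by rewrite (cohort_split (fun _ => 1) w); apply: eq_bigr => g _; rewrite mul1r.
Qed.

Lemma cE_ext g (X Z : Om -> R) :
  (forall w, G w = g -> X w = Z w) -> cE P G g X = cE P G g Z.
Proof.
move=> hXZ; rewrite /cE; congr (Ex P _ / _); apply/funext => w.
by rewrite /indG; case: eqP => [/hXZ ->|_]; rewrite ?mulr0.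
Qed.

Lemma cE_add g (X Z : Om -> R) : X \in L1 -> Z \in L1 ->
  cE P G g (fun w => X w + Z w) = cE P G g X + cE P G g Z.
Proof.
move=> hX hZ; rewrite /cE -mulrDl -Ex_add ?L1_restrict //.
by congr (Ex P _ / _); apply/funext => w; rewrite mulrDl.
Qed.

Lemma cE_scale g (k : R) (X : Om -> R) : X \in L1 ->
  cE P G g (fun w => k * X w) = k * cE P G g X.
Proof.
move=> hX; rewrite /cE mulrA -Ex_scale ?L1_restrict //.
by congr (Ex P _ / _); apply/funext => w; rewrite mulrA.
Qed.

Lemma cE_cst g (c : R) : g \in Gs -> cE P G g (fun _ => c) = c.
Proof.
move=> hg; rewrite /cE Ex_scale ?indG_L1 // -pgE.
by rewrite -mulrA divff ?mulr1 // pg_neq0.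
Qed.

Lemma cE_sum g (I : Type) (s : seq I) (c : I -> R) (X : I -> Om -> R) :
  (forall i, X i \in L1) ->
  cE P G g (fun w => \sum_(i <- s) c i * X i w) = \sum_(i <- s) c i * cE P G g (X i).
Proof.
move=> hX; rewrite /cE.
have -> : (fun w => (\sum_(i <- s) c i * X i w) * indG G g w) =
          (fun w => \sum_(i <- s) c i * (X i w * indG G g w)).
  by apply/funext => w; rewrite big_distrl /=; apply: eq_bigr => i _; rewrite mulrA.
rewrite Ex_sum => [|i]; last by apply: rpredZ; exact: L1_restrict.
rewrite big_distrl /=; apply: eq_bigr => i _.
by rewrite Ex_scale ?L1_restrict // mulrA.
Qed.

Lemma Ex_total (X : Om -> R) : X \in L1 ->
  Ex P X = \sum_(g <- Gs) pg P G g * cE P G g X.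
Proof.
move=> hX.
have -> : X = (fun w => \sum_(g <- Gs) X w * indG G g w).
  by apply/funext => w; rewrite -(cohort_split (fun _ => X w)).
rewrite Ex_sum => [|g]; last exact: L1_restrict.
apply: eq_big_seq => g hg; rewrite /cE mulrC -mulrA mulVf ?mulr1 ?pg_neq0 //.
by congr (Ex P _); apply/funext => w; rewrite -(cohort_split (fun _ => X w)).
Qed.

Lemma cE_ge0 g (X : Om -> R) : (forall w, 0 <= X w) -> 0 <= cE P G g X.
Proof.
move=> hX; apply: divr_ge0; last exact: pg_ge0.
by apply: Ex_ge0 => w; apply: mulr_ge0 => //; exact: indG_ge0.
Qed.

Lemma cVar_ge0 g (Z : Om -> R) : 0 <= cVar P G g Z.
Proof. by apply: cE_ge0 => w; rewrite -expr2 sqr_ge0. Qed.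

Lemma cCov_expand g (X Z : Om -> R) : g \in Gs ->
  X \in L1 -> Z \in L1 -> (fun w => X w * Z w) \in L1 ->
  cCov P G g X Z = cE P G g (fun w => X w * Z w) - cE P G g X * cE P G g Z.
Proof.
move=> hg hX hZ hXZ; rewrite /cCov.
set x := cE P G g X; set z := cE P G g Z.
have -> : (fun w => (X w - x) * (Z w - z)) =
          (fun w => (X w * Z w + (- z) * X w) + ((- x) * Z w + x * z)).
  by apply/funext => w; ring.
have hl : (fun w => X w * Z w + (- z) * X w) \in L1 by exact: rpredD hXZ (rpredZ _ hX).
have hr : (fun w => (- x) * Z w + x * z) \in L1.
  by apply: rpredD; [exact: rpredZ | exact: Lfun_cst].
rewrite !cE_add ?cE_cst ?cE_scale // -/x -/z; first ring.
- exact: rpredZ.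
- exact: Lfun_cst.
- exact: rpredZ.
Qed.

Lemma total_covariance (X Z : Om -> R) :
  X \in L1 -> Z \in L1 -> (fun w => X w * Z w) \in L1 ->
  Covar P X Z = \sum_(g <- Gs) pg P G g * cCov P G g X Z
    + \sum_(g <- Gs) \sum_(k <- Gs | (g < k)%N) pg P G g * pg P G k *
        ((cE P G g X - cE P G k X) * (cE P G g Z - cE P G k Z)).
Proof.
move=> hX hZ hXZ.
have pairs := weighted_cov_pairs Gs (pg P G) (fun g => cE P G g X)
  (fun g => cE P G g Z) sum_pg.
rewrite /= in pairs; rewrite -pairs /Covar !Ex_total //.
have -> : \sum_(g <- Gs) pg P G g * cCov P G g X Z =
  \sum_(g <- Gs) pg P G g * cE P G g (fun w => X w * Z w)
  - \sum_(g <- Gs) pg P G g * cE P G g X * cE P G g Z.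
  by rewrite -sumrB; apply: eq_big_seq => g hg; rewrite cCov_expand //; ring.
ring.
Qed.

Lemma cCov_sum_l g (I : Type) (s : seq I) (c : I -> R) (X : I -> Om -> R)
  (Z : Om -> R) : g \in Gs -> Z \in L1 ->
  (forall i, X i \in L1) -> (forall i, (fun w => X i w * Z w) \in L1) ->
  cCov P G g (fun w => \sum_(i <- s) c i * X i w) Z
  = \sum_(i <- s) c i * cCov P G g (X i) Z.
Proof.
move=> hg hZ hX hXZ.
have sumL1 (F : I -> Om -> R) : (forall i, F i \in L1) ->
    (fun w => \sum_(i <- s) c i * F i w) \in L1.
  by move=> hF; apply: L1_sum => i; exact: rpredZ.
have prodE : (fun w => (\sum_(i <- s) c i * X i w) * Z w) =
             (fun w => \sum_(i <- s) c i * (X i w * Z w)).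
  by apply/funext => w; rewrite big_distrl; apply: eq_bigr => i _; rewrite mulrA.
rewrite cCov_expand ?sumL1 ?prodE ?sumL1 // !cE_sum // big_distrl -sumrB /=.
by apply: eq_bigr => i _; rewrite cCov_expand //; ring.
Qed.

(* Degenerate Cauchy-Schwarz: a variable with zero within-cohort variance
   has zero within-cohort covariance with every square-integrable variable. *)
Lemma cCov_var0 {g} {X Z : Om -> R} : X \in L2 -> Z \in L2 ->
  cVar P G g Z = 0 -> cCov P G g X Z = 0.
Proof.
move=> hX hZ hV.
set x := cE P G g X; set z := cE P G g Z.
have hX' := L2_subr_cst P x _ hX; have hZ' := L2_subr_cst P z _ hZ.
have hXX := Lfun2_mul_Lfun1 hX' hX'; have hXZ := Lfun2_mul_Lfun1 hX' hZ'.
have hZZ := Lfun2_mul_Lfun1 hZ' hZ'.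
apply: (@affine_nonneg_slope0 _ (cE P G g (fun w => (X w - x) * (X w - x)))).
move=> l; have := @cE_ge0 g (fun w => (X w - x + l / 2 * (Z w - z)) ^+ 2)
  (fun w => sqr_ge0 _).
have -> : (fun w => (X w - x + l / 2 * (Z w - z)) ^+ 2) =
  (fun w => (X w - x) * (X w - x) + (l * ((X w - x) * (Z w - z))
             + (l / 2) ^+ 2 * ((Z w - z) * (Z w - z)))).
  by apply/funext => w; field.
rewrite cE_add //; last by apply: rpredD; exact: rpredZ.
rewrite cE_add ?cE_scale //; try exact: rpredZ.
have -> : cE P G g (fun w => (Z w - z) * (Z w - z)) = 0 by exact: hV.
by rewrite mulr0 addr0.
Qed.

Lemma cCov_cohort_scale {g} {a b : R} {X Z X' Z' : Om -> R} :
  X \in L2 -> Z \in L2 ->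
  (forall w, G w = g -> X' w = a * X w) -> (forall w, G w = g -> Z' w = b * Z w) ->
  cCov P G g X' Z' = a * b * cCov P G g X Z.
Proof.
move=> hX hZ hXX' hZZ'.
have meanE (V V' : Om -> R) c : V \in L2 -> (forall w, G w = g -> V' w = c * V w) ->
    cE P G g V' = c * cE P G g V.
  by move=> hV hVV'; rewrite (@cE_ext g V' (fun w => c * V w) hVV') cE_scale // L2_L1.
rewrite /cCov (meanE _ _ _ hX hXX') (meanE _ _ _ hZ hZZ').
transitivity (cE P G g (fun w => a * b * ((X w - cE P G g X) * (Z w - cE P G g Z)))).
  by apply: cE_ext => w hw; rewrite hXX' // hZZ' //; ring.
by rewrite cE_scale //; exact: (Lfun2_mul_Lfun1 (L2_subr_cst P _ _ hX) (L2_subr_cst P _ _ hZ)).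
Qed.

Section TWFE.
Context (TT : nat) (D : Om -> R) (Y : nat -> Om -> R).
Hypothesis HGs_range : forall g, g \in Gs -> (2 <= g <= TT.+1)%N.
Hypothesis HY2 : forall t, Y t \in L2.
Hypothesis HD2 : D \in L2.
Local Notation m g := (cE P G g D).

Definition Wdm (t : nat) (w : Om) : R := tdev TT (G w) t * D w.

Lemma Wt_cohort t w : Wt G D t w = ((G w <= t)%N)%:R * D w.
Proof. by rewrite /Wt; case: (G w <= t)%N; rewrite ?mul1r ?mul0r. Qed.

Lemma Wdm_Wt t w : Wdm t w = Wt G D t w - Wbar TT G D w.
Proof.
have /andP [g2 _] := HGs_range _ (HG_in w).
rewrite /Wbar /Wdm /tdev /Gbar; under eq_bigr do rewrite Wt_cohort.
by rewrite -big_distrl /= count_treated ?Wt_cohort; [ring | lia].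
Qed.

Lemma D_L1 : D \in L1.
Proof. exact: L2_L1. Qed.

Lemma Y_L1 t : Y t \in L1.
Proof. exact: L2_L1. Qed.

Lemma Wdm_L1 t : Wdm t \in L1.
Proof. exact: (L1_cohort_scale (fun g => tdev TT g t) _ D_L1). Qed.

Lemma Wdm_mul_L1 (H : Om -> R) t : H \in L2 -> (fun w => H w * Wdm t w) \in L1.
Proof.
move=> hH; have -> : (fun w => H w * Wdm t w) =
                    (fun w => tdev TT (G w) t * (H w * D w)).
  by apply/funext => w; rewrite /Wdm; ring.
exact: (L1_cohort_scale (fun g => tdev TT g t) _ (Lfun2_mul_Lfun1 hH HD2)).
Qed.

Lemma Wdm_sq_L1 t : (fun w => Wdm t w * Wdm t w) \in L1.
Proof.
have -> : (fun w => Wdm t w * Wdm t w) =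
          (fun w => tdev TT (G w) t ^+ 2 * (D w * D w)).
  by apply/funext => w; rewrite /Wdm; ring.
exact: (L1_cohort_scale (fun g => tdev TT g t ^+ 2) _ (Lfun2_mul_Lfun1 HD2 HD2)).
Qed.

Lemma Wt_L1 t : Wt G D t \in L1.
Proof.
have -> : Wt G D t = (fun w => ((G w <= t)%N)%:R * D w).
  by apply/funext => w; exact: Wt_cohort.
exact: (L1_cohort_scale (fun g => ((g <= t)%N)%:R) _ D_L1).
Qed.

Lemma Wdd_centred t : Wdd P TT G D t = (fun w => Wdm t w - Ex P (Wdm t)).
Proof.
have -> : Wdm t = (fun w => Wt G D t w + (- TT%:R^-1) * \sum_(1 <= s < TT.+1) Wt G D s w).
  by apply/funext => w; rewrite Wdm_Wt /Wbar; ring.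
have hsum : (fun w => \sum_(1 <= s < TT.+1) Wt G D s w) \in L1.
  by apply: L1_sum => s; exact: Wt_L1.
rewrite Ex_add ?Wt_L1 ?Ex_scale ?Ex_sum //; [|exact: Wt_L1 | exact: rpredZ].
by apply/funext => w; rewrite /Wdd /Wbar; ring.
Qed.

Lemma cE_Wdm g t : cE P G g (Wdm t) = tdev TT g t * m g.
Proof.
by rewrite (@cE_ext g (Wdm t) (fun w => tdev TT g t * D w)) ?cE_scale ?D_L1 // => w <-.
Qed.

Lemma Ex_Y_Wdd t : Ex P (fun w => Y t w * Wdd P TT G D t w) = Covar P (Y t) (Wdm t).
Proof.
rewrite Wdd_centred Ex_mul_centred //; [exact: L2_L1 | exact: Wdm_mul_L1].
Qed.

Lemma Ex_Wdd_sq t : Ex P (fun w => Wdd P TT G D t w ^+ 2) = Covar P (Wdm t) (Wdm t).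
Proof.
by rewrite Wdd_centred Ex_sq_centred //; [exact: Wdm_L1 | exact: Wdm_sq_L1].
Qed.

Lemma cov_Y_Wdm t : Covar P (Y t) (Wdm t) =
  \sum_(g <- Gs) pg P G g * (tdev TT g t * cCov P G g (Y t) D)
  + \sum_(g <- Gs) \sum_(k <- Gs | (g < k)%N) pg P G g * pg P G k *
      ((tdev TT g t * m g - tdev TT k t * m k) * (cE P G g (Y t) - cE P G k (Y t))).
Proof.
rewrite total_covariance; [|exact: L2_L1 | exact: Wdm_L1 | exact: Wdm_mul_L1].
congr (_ + _).
  apply: eq_bigr => g _.
  have hY : forall w, G w = g -> Y t w = 1 * Y t w by move=> w _; rewrite mul1r.
  have hW : forall w, G w = g -> Wdm t w = tdev TT g t * D w by move=> w <-.
  by rewrite (cCov_cohort_scale (HY2 t) HD2 hY hW) mul1r.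
apply: eq_bigr => g _; apply: eq_bigr => k _.
by rewrite !cE_Wdm; ring.
Qed.

Lemma var_Wdm t : Covar P (Wdm t) (Wdm t) =
  \sum_(g <- Gs) pg P G g * (tdev TT g t ^+ 2 * cVar P G g D)
  + \sum_(g <- Gs) \sum_(k <- Gs | (g < k)%N) pg P G g * pg P G k *
      (tdev TT g t * m g - tdev TT k t * m k) ^+ 2.
Proof.
rewrite total_covariance; [|exact: Wdm_L1 | exact: Wdm_L1 | exact: Wdm_sq_L1].
congr (_ + _).
  apply: eq_bigr => g _.
  have hW : forall w, G w = g -> Wdm t w = tdev TT g t * D w by move=> w <-.
  by rewrite (cCov_cohort_scale HD2 HD2 hW hW) expr2.
apply: eq_bigr => g _; apply: eq_bigr => k _.
by rewrite !cE_Wdm expr2.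
Qed.

Lemma Yavg_contrastE (a b a' b' : nat) : (1 <= a)%N -> (a <= b.+1)%N ->
  (b <= TT)%N -> (1 <= a')%N -> (a' <= b'.+1)%N -> (b' <= TT)%N ->
  (fun w => Yavg Y a b w - Yavg Y a' b' w)
  = (fun w => \sum_(1 <= t < TT.+1) (win a b t - win a' b' t) * Y t w).
Proof.
move=> a1 ab bT a'1 a'b' b'T; apply/funext => w.
rewrite /Yavg !(window_avg (fun t => Y t w) TT) // -sumrB.
by apply: eq_bigr => t _; rewrite mulrBl.
Qed.

Lemma cCov_post_pre g : g \in Gs ->
  cCov P G g (fun w => Ypost TT Y g w - Ypre Y g w) D
  = \sum_(1 <= t < TT.+1) (win g TT t - win 1 g.-1 t) * cCov P G g (Y t) D.
Proof.
move=> hg; have /andP [g2 gT] := HGs_range _ hg.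
rewrite /Ypost /Ypre Yavg_contrastE; try lia.
rewrite cCov_sum_l //; [exact: D_L1 | exact: Y_L1 | move=> t].
exact: Lfun2_mul_Lfun1.
Qed.

Lemma avg_within_cov g : g \in Gs ->
  (\sum_(1 <= t < TT.+1) tdev TT g t * cCov P G g (Y t) D) / TT%:R
  = (1 - Gbar TT g) * Gbar TT g
    * cCov P G g (fun w => Ypost TT Y g w - Ypre Y g w) D.
Proof.
by move=> hg; rewrite avg_tdev_within ?HGs_range // cCov_post_pre.
Qed.

Lemma avg_pair_means g k : g \in Gs -> k \in Gs -> (g < k)%N ->
  (\sum_(1 <= t < TT.+1) (tdev TT g t * m g - tdev TT k t * m k)
     * (cE P G g (Y t) - cE P G k (Y t))) / TT%:R
  = m g * (1 - Gbar TT g) * (Gbar TT g - Gbar TT k)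
      * (cE P G g (fun w => Ymid Y g k w - Ypre Y g w)
         - cE P G k (fun w => Ymid Y g k w - Ypre Y g w))
  + m k * Gbar TT k * (Gbar TT g - Gbar TT k)
      * (cE P G k (fun w => Ypost TT Y k w - Ymid Y g k w)
         - cE P G g (fun w => Ypost TT Y k w - Ymid Y g k w))
  + (m g - m k) * Gbar TT k * (1 - Gbar TT g)
      * (cE P G g (fun w => Ypost TT Y k w - Ypre Y g w)
         - cE P G k (fun w => Ypost TT Y k w - Ypre Y g w)).
Proof.
move=> hg hk gk.
have /andP [g2 gT] := HGs_range _ hg; have /andP [k2 kT] := HGs_range _ hk.
rewrite avg_tdev_pair // /Ypost /Ypre /Ymid.
rewrite (Yavg_contrastE g k.-1 1 g.-1); try lia.
rewrite (Yavg_contrastE k TT g k.-1); try lia.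
rewrite (Yavg_contrastE k TT 1 g.-1); try lia.
rewrite !cE_sum; try exact: Y_L1.
have diff (c : nat -> R) : \sum_(1 <= t < TT.+1) c t * (cE P G g (Y t) - cE P G k (Y t))
    = \sum_(1 <= t < TT.+1) c t * cE P G g (Y t) - \sum_(1 <= t < TT.+1) c t * cE P G k (Y t).
  by rewrite -sumrB; apply: eq_bigr => t _; rewrite mulrBr.
by rewrite !diff; ring.
Qed.

Lemma twfe_numerator :
  (\sum_(1 <= t < TT.+1) Ex P (fun w => Y t w * Wdd P TT G D t w)) / TT%:R
  = \sum_(g <- Gs) (1 - Gbar TT g) * Gbar TT g * pg P G g
      * cCov P G g (fun w => Ypost TT Y g w - Ypre Y g w) D
  + \sum_(g <- Gs) \sum_(k <- Gs | (g < k)%N) pg P G g * pg P G k *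
     (m g * (1 - Gbar TT g) * (Gbar TT g - Gbar TT k)
        * (cE P G g (fun w => Ymid Y g k w - Ypre Y g w)
           - cE P G k (fun w => Ymid Y g k w - Ypre Y g w))
    + m k * Gbar TT k * (Gbar TT g - Gbar TT k)
        * (cE P G k (fun w => Ypost TT Y k w - Ymid Y g k w)
           - cE P G g (fun w => Ypost TT Y k w - Ymid Y g k w))
    + (m g - m k) * Gbar TT k * (1 - Gbar TT g)
        * (cE P G g (fun w => Ypost TT Y k w - Ypre Y g w)
           - cE P G k (fun w => Ypost TT Y k w - Ypre Y g w))).
Proof.
under eq_bigr do rewrite Ex_Y_Wdd cov_Y_Wdm.
rewrite avg_cohort_split; congr (_ + _).
  apply: eq_big_seq => g hg.
  by rewrite -mulr_sumr -mulrA avg_within_cov //; ring.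
apply: eq_big_seq => g hg; rewrite big_seq_cond [RHS]big_seq_cond.
apply: eq_bigr => k /andP [hk gk].
by rewrite -mulr_sumr -mulrA avg_pair_means.
Qed.

Lemma twfe_denominator : Vtw P TT G D =
  \sum_(g <- Gs) cVar P G g D * (1 - Gbar TT g) * Gbar TT g * pg P G g
  + \sum_(g <- Gs) \sum_(k <- Gs | (g < k)%N)
     (m g ^+ 2 * (1 - Gbar TT g) * (Gbar TT g - Gbar TT k) * (pg P G g * pg P G k)
    + m k ^+ 2 * Gbar TT k * (Gbar TT g - Gbar TT k) * (pg P G g * pg P G k)
    + (m g - m k) ^+ 2 * Gbar TT k * (1 - Gbar TT g) * (pg P G g * pg P G k)).
Proof.
rewrite /Vtw; under eq_bigr do rewrite Ex_Wdd_sq var_Wdm.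
rewrite avg_cohort_split; congr (_ + _).
  apply: eq_big_seq => g hg; have /andP [g2 gT] := HGs_range _ hg.
  rewrite -mulr_sumr -mulrA -mulr_suml mulrAC avg_tdev_sq; try lia.
  by ring.
apply: eq_big_seq => g hg; rewrite big_seq_cond [RHS]big_seq_cond.
apply: eq_bigr => k /andP [hk gk].
have /andP [g2 gT] := HGs_range _ hg; have /andP [k2 kT] := HGs_range _ hk.
rewrite -mulr_sumr -mulrA avg_tdev_pair_sq; try lia.
by ring.
Qed.

Lemma twfe_decomposition : beta_twfe P TT G D Y =
  \sum_(g <- Gs) w_within P TT G D g * delta_within P TT G D Y g
  + \sum_(g <- Gs) \sum_(k <- Gs | (g < k)%N)
      (w_gpost P TT G D g k * delta_mid_pre P G D Y g k
       + w_kpost P TT G D g k * delta_post_mid P TT G D Y g k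
       + w_long P TT G D g k * delta_post_pre P TT G D Y g k).
Proof.
rewrite /beta_twfe twfe_numerator mulrDl !mulr_suml; congr (_ + _).
  apply: eq_big_seq => g hg; rewrite /w_within /delta_within ratio_cancel // => v0.
  rewrite cCov_post_pre // big1 // => t _.
  by rewrite (cCov_var0 (HY2 t) HD2 v0) mulr0.
apply: eq_bigr => g _; rewrite mulr_suml; apply: eq_bigr => k _.
rewrite /w_gpost /w_kpost /w_long /delta_mid_pre /delta_post_mid /delta_post_pre.
by rewrite !ratio_cancel_sq; ring.
Qed.

Lemma Vtw_ge0 : 0 <= Vtw P TT G D.
Proof.
rewrite /Vtw divr_ge0 // sumr_ge0 // => t _.
by apply: Ex_ge0 => w; exact: sqr_ge0.
Qed.

(* The weights sum to one: their numerators add up to the TWFE denominator. *)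
Lemma weights_sum1 : Vtw P TT G D != 0 ->
  \sum_(g <- Gs) w_within P TT G D g
  + \sum_(g <- Gs) \sum_(k <- Gs | (g < k)%N)
      (w_gpost P TT G D g k + w_kpost P TT G D g k + w_long P TT G D g k) = 1.
Proof.
move=> V0; rewrite -[RHS](divff V0) [X in _ = X / _]twfe_denominator mulrDl.
rewrite !mulr_suml; congr (_ + _); apply: eq_bigr => g _.
by rewrite mulr_suml; apply: eq_bigr => k _; rewrite -!mulrDl.
Qed.

Lemma w_within_ge0 g : g \in Gs -> 0 <= w_within P TT G D g.
Proof.
move=> hg; have /andP [g2 gT] := HGs_range _ hg.
have h1 : 0 <= 1 - Gbar TT g :> R by rewrite subr_ge0 Gbar_le1 //; lia.
apply: divr_ge0 Vtw_ge0; apply: mulr_ge0 (pg_ge0 _).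
exact: mulr_ge0 (mulr_ge0 (cVar_ge0 _ _) h1) (Gbar_ge0 _ _).
Qed.

Lemma w_pair_ge0 g k : g \in Gs -> (g < k)%N ->
  0 <= w_gpost P TT G D g k /\ 0 <= w_kpost P TT G D g k /\ 0 <= w_long P TT G D g k.
Proof.
move=> hg gk; have /andP [g2 gT] := HGs_range _ hg.
have h1 : 0 <= 1 - Gbar TT g :> R by rewrite subr_ge0 Gbar_le1 //; lia.
have h2 : 0 <= Gbar TT g - Gbar TT k :> R by rewrite subr_ge0 Gbar_mono //; lia.
have h3 : 0 <= pg P G g * pg P G k by rewrite mulr_ge0 ?pg_ge0.
have nn (a b c e : R) : 0 <= b -> 0 <= c -> 0 <= e ->
    0 <= a ^+ 2 * b * c * e / Vtw P TT G D.
  move=> hb hc he; apply: divr_ge0 Vtw_ge0.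
  exact: mulr_ge0 (mulr_ge0 (mulr_ge0 (sqr_ge0 a) hb) hc) he.
by split; [|split]; apply: nn => //; exact: Gbar_ge0.
Qed.

End TWFE.
End Cohorts.

(* Proposition 5.  The decomposition and the properties of the weights are
   identities in the population moments: besides the cohort structure and
   finite second moments, they only use that the TWFE denominator is
   positive. *)
Theorem proposition5
  (d : measure_display) (Om : measurableType d) (R : realType)
  (P : probability Om R) (TT : nat)
  (Gs : seq nat) (Dplus : set R)
  (G : Om -> nat) (D : Om -> R)
  (Ypo : nat -> nat -> R -> Om -> R) (* Y_t(g,d) *)
  (Y : nat -> Om -> R) (* observed Y_t *)
  (* setup *)
  (HT : (0 < TT)%N)
  (HGs_uniq : uniq Gs)
  (HGs_range : forall g, g \in Gs -> (2 <= g <= TT.+1)%N)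
  (HG_in : forall w, G w \in Gs)
  (HGs_pos : forall g, g \in Gs -> 0 < pg P G g)
  (HG_meas : forall g, measurable [set w | G w = g])
  (HD_nonneg : forall w, 0 <= D w)
  (HD0 : forall w, D w = 0 <-> G w = TT.+1)
  (HY_obs : forall t w, Y t w = if (t < G w)%N then Ypo t TT.+1 0 w
                                else Ypo t (G w) (D w) w)
  (* finite second moments *)
  (HY2 : forall t, Y t \in Lfun P 2%:E)
  (HD2 : D \in Lfun P 2%:E)
  (* 2-MP(a) *)
  (HDplus : forall x, Dplus x -> 0 < x)
  (HsuppD : forall x, in_support P D x <-> (x = 0 \/ Dplus x))
  (HPD0 : 0 < Pr P [set w | D w = 0])
  (HcsuppD : forall g, g \in Gs -> (g <= TT)%N ->
               forall x, Dplus x -> in_csupport P G g D x)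
  (* 3-MP *)
  (Hnoanti : forall t g (x : R) w, (t < g)%N -> Ypo t g x w = Ypo t TT.+1 0 w)
  (Hstag : forall w, Wt G D 1 w = 0 /\
             forall t (x : R), (2 <= t <= TT)%N -> Dplus x ->
               Wt G D t.-1 w = x -> Wt G D t w = x)
  (HV : 0 < Vtw P TT G D) :
  beta_twfe P TT G D Y =
    \sum_(g <- Gs) w_within P TT G D g * delta_within P TT G D Y g
    + \sum_(g <- Gs) \sum_(k <- Gs | (g < k)%N)
        (w_gpost P TT G D g k * delta_mid_pre P G D Y g k
         + w_kpost P TT G D g k * delta_post_mid P TT G D Y g k
         + w_long P TT G D g k * delta_post_pre P TT G D Y g k)
  /\ (forall g, g \in Gs -> 0 <= w_within P TT G D g)
  /\ (forall g k, g \in Gs -> k \in Gs -> (g < k)%N ->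
        0 <= w_gpost P TT G D g k /\ 0 <= w_kpost P TT G D g k
        /\ 0 <= w_long P TT G D g k)
  /\ \sum_(g <- Gs) w_within P TT G D g
     + \sum_(g <- Gs) \sum_(k <- Gs | (g < k)%N)
         (w_gpost P TT G D g k + w_kpost P TT G D g k + w_long P TT G D g k)
     = 1.
Proof.
split; last split; last split.
- apply: (twfe_decomposition P Gs); assumption.
- move=> g hg; apply: (w_within_ge0 P Gs); assumption.
- move=> g k hg _ gk; apply: (w_pair_ge0 P Gs); assumption.
- apply: (weights_sum1 P Gs); rewrite ?gt_eqF //; assumption.
Qed.
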